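(* Let $\mathcal P_{XY}$ be any distribution on $\mathbb R^p\times\mathbb R$ and let $Z_i=(X_i,Y_i)$, $i=1,\dots,n+1$, be i.i.d. draws from $\mathcal P_{XY}$, where $Y_{n+1}$ is unobserved. Let $\mathcal Z$ and $\mathcal X$ denote the unordered sets $\{Z_1,\dots,Z_{n+1}\}$ and $\{X_1,\dots,X_{n+1}\}$. Let $V(z)=V(z;\mathcal Z)$ be a real-valued score function whose form may depend on the data only through $\mathcal Z$, with $V_i=V(Z_i;\mathcal Z)$, and let $H:\mathbb R^p\times\mathbb R^p\to[0,1]$ be a localizer whose form may depend on the data only through $\mathcal X$, with $H(x,x)=1$. Put $H_{ij}=H(X_i,X_j)$, $p^H_{ij}=H_{ij}/\sum_{k=1}^{n+1}H_{ik}$, $\hat{\mathcal F}_i=\sum_{j=1}^{n+1}p^H_{ij}\delta_{V_j}$ for $i=1,\dots,n+1$, $\hat{\mathcal F}=\sum_{j=1}^{n}p^H_{n+1,j}\delta_{V_j}+p^H_{n+1,n+1}\delta_{+\infty}$, and $\Gamma=\{\sum_{k\in I}p^H_{ik}: i\in\{1,\dots,n+1\},\ I\subseteq\{1,\dots,n+1\}\}$. Fix $\alpha\in(0,1)$. For each $y\in\mathbb R$, let $\tilde\alpha(y)$ be the smallest value in $\Gamma$ such that $\frac{1}{n+1}\sum_{i=1}^{n+1}\mathbb 1\{V_i\le Q(\tilde\alpha(y);\hat{\mathcal F}_i)\}\ge\alpha$, where all scores and weighted distributions are evaluated with $Z_{n+1}$ replaced by $(X_{n+1},y)$. Define $C(X_{n+1})=\{y: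 V_{n+1}\le Q(\tilde\alpha(y);\hat{\mathcal F})\}$, where again $V_{n+1}=V((X_{n+1},y);\mathcal Z)$ and $\hat{\mathcal F}$ are evaluated at $Z_{n+1}=(X_{n+1},y)$. Then $\mathbb P\{Y_{n+1}\in C(X_{n+1})\}\ge\alpha$.
   Context: For a distribution $\mathcal F$ on $\mathbb R\cup\{+\infty\}$, $Q(\alpha;\mathcal F)=\inf\{t:\mathbb P_{T\sim\mathcal F}(T\le t)\ge\alpha\}$. $\delta_v$ is the point mass at $v$. *)

From HB Require Import structures.
From mathcomp Require Import all_boot all_order all_algebra.
From mathcomp Require Import all_classical all_reals all_analysis.
Set Implicit Arguments. Unset Strict Implicit. Unset Printing Implicit Defensive.
Import Order.TTheory GRing.Theory Num.Theory.
Local Open Scope classical_set_scope.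
Local Open Scope ring_scope.

Section LCP.
Variable R : realType.

(* Quantile Q(alpha; F) = inf { t in R : P_{T ~ F}(T <= t) >= alpha } of the
   finitely supported distribution F = \sum_j w j \delta_{v j} on R \cup {+oo}. *)
Definition wcdf m (w : 'I_m -> R) (v : 'I_m -> \bar R) (t : \bar R) : R :=
  \sum_(j < m | (v j <= t)%E) w j.

Definition wquantile m (alpha : R) (w : 'I_m -> R) (v : 'I_m -> \bar R) : \bar R :=
  ereal_inf [set t%:E | t in [set t : R | alpha <= wcdf w v t%:E]].

Variable p n : nat.
Notation Xp := (p.-tuple R).
Notation Zt := (Xp * R)%type.

Variable V : Zt -> (n.+1).-tuple Zt -> R.
Variable H : Xp -> Xp -> (n.+1).-tuple Xp -> R.
Variable alpha : R.

Section Data.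
(* s : the (n+1) data points, the last one (index ord_max) being the test point *)
Variable s : (n.+1).-tuple Zt.

Definition covs : (n.+1).-tuple Xp := [tuple (tnth s i).1 | i < n.+1].
Definition Hm (i j : 'I_n.+1) : R := H (tnth covs i) (tnth covs j) covs.
Definition pH (i j : 'I_n.+1) : R := Hm i j / \sum_(k < n.+1) Hm i k.
Definition Vs (i : 'I_n.+1) : R := V (tnth s i) s.

(* \hat F_i = \sum_j pH i j \delta_{V_j} *)
Definition Fi_vals (j : 'I_n.+1) : \bar R := (Vs j)%:E.
(* \hat F = \sum_{j <= n} pH (n+1) j \delta_{V_j} + pH (n+1) (n+1) \delta_{+oo} *)
Definition Fhat_vals (j : 'I_n.+1) : \bar R :=
  if j == ord_max then +oo%E else (Vs j)%:E.

Definition Gamma : set R :=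
  [set g | exists (i : 'I_n.+1) (I : {set 'I_n.+1}), g = \sum_(k in I) pH i k].

Definition alpha_cond (g : R) : Prop :=
  alpha <= (n.+1)%:R^-1 *
    \sum_(i < n.+1) (((Vs i)%:E <= wquantile g (pH i) Fi_vals)%E : nat)%:R.

Definition alpha_tilde : R := inf [set g | Gamma g /\ alpha_cond g].

Definition covered : Prop :=
  ((Vs ord_max)%:E <= wquantile alpha_tilde (pH ord_max) Fhat_vals)%E.
End Data.

Definition with_y (s : (n.+1).-tuple Zt) (y : R) : (n.+1).-tuple Zt :=
  [tuple (if i == ord_max then ((tnth s i).1, y) else tnth s i) | i < n.+1].

(* C(X_{n+1}) = { y : V_{n+1} <= Q(alpha_tilde(y); \hat F) }, all evaluated at
   Z_{n+1} = (X_{n+1}, y); it depends on s only through Z_1..Z_n and X_{n+1}. *)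
Definition conf_set (s : (n.+1).-tuple Zt) : set R :=
  [set y | covered (with_y s y)].

End LCP.

Definition mutually_independent {R : realType} {d d' : measure_display}
  {Omega : measurableType d} {T : measurableType d'} (P : probability Omega R)
  (m : nat) (Zs : 'I_m -> Omega -> T) : Prop :=
  forall A : 'I_m -> set T, (forall i, measurable (A i)) ->
    P (\bigcap_(i in [set: 'I_m]) (Zs i @^-1` A i)) =
    (\prod_(i < m) P (Zs i @^-1` A i))%E.

Definition identically_distributed {R : realType} {d d' : measure_display}
  {Omega : measurableType d} {T : measurableType d'} (P : probability Omega R)
  (m : nat) (Zs : 'I_m.+1 -> Omega -> T) : Prop :=
  forall (i : 'I_m.+1) (A : set T), measurable A ->
    P (Zs i @^-1` A) = P (Zs ord0 @^-1` A).

(* Call the i-th data point "covered" when the p^H_i-mass of the scores lying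
   strictly below V_i is smaller than alpha-tilde.  The quantile of a weighted
   empirical distribution is at least x exactly when the mass strictly below x
   is smaller than the level, so Y_{n+1} lies in C(X_{n+1}) iff point n+1 is
   covered (the atom of F-hat at +oo carries the weight of V_{n+1} itself and
   never lies below it).  The choice of alpha-tilde makes at least a fraction
   alpha of the n+1 points covered, for every data set.  Since V and H only
   see the unordered data, permuting the data permutes the covered points, and
   i.i.d. data are exchangeable, so every point is covered with the same
   probability; averaging the number of covered points gives the bound. *)

From HB Require Import structures.
From mathcomp Require Import all_boot all_order all_algebra all_fingroup.
From mathcomp Require Import all_classical all_reals all_analysis.
From mathcomp Require Import measurable_realfun.
Import Order.TTheory GRing.Theory Num.Theory.
Local Open Scope classical_set_scope.
Local Open Scope ring_scope.
Set Implicit Arguments. Unset Strict Implicit. Unset Printing Implicit Defensive.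

Lemma wcdf_below (R : realType) m (x : R) (w : 'I_m -> R) (v : 'I_m -> \bar R) :
  exists2 t, t < x & wcdf w v t%:E = \sum_(j < m | (v j < x%:E)%E) w j.
Proof.
pose t := \big[Num.max/(x - 1)]_(j < m | (v j < x%:E)%E)
            (if v j is r%:E then r else x - 1).
have x1x : x - 1 < x by rewrite ltrBlDr ltrDl.
have tx : t < x.
  rewrite /t; elim/big_ind: _ => // [a b ? ?|j]; first by rewrite gt_max; apply/andP.
  by case: (v j).
exists t => //; apply: eq_bigl => j; apply/idP/idP => [vjt|].
  by apply: le_lt_trans vjt _; rewrite lte_fin.
move=> vjx; rewrite /t (bigD1 j vjx) /=; move: vjx.
by case: (v j) => [r _| //| _]; rewrite ?leNye // lee_fin le_max lexx.
Qed.

Lemma lee_wquantile (R : realType) m (g x : R) (w : 'I_m -> R) (v : 'I_m -> \bar R) :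
  (forall j, 0 <= w j) ->
  (x%:E <= wquantile g w v)%E = (\sum_(j < m | (v j < x%:E)%E) w j < g).
Proof.
move=> w_ge0; apply/idP/idP => [xQ|lt_g].
  rewrite ltNge; apply/negP => le_g.
  have [t tx wt] := wcdf_below x w v.
  have : (wquantile g w v <= t%:E)%E by apply: ereal_inf_lbound; exists t; rewrite //= wt.
  by move/(le_trans xQ); rewrite lee_fin leNgt tx.
apply: le_ereal_inf_tmp => _ [t /= g_le <-]; rewrite lee_fin leNgt; apply/negP => tx.
suff : wcdf w v t%:E <= \sum_(j < m | (v j < x%:E)%E) w j.
  by move/(le_trans g_le)/(lt_le_trans lt_g); rewrite ltxx.
have -> : wcdf w v t%:E = \sum_(j < m | (v j < x%:E)%E && (v j <= t%:E)%E) w j.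
  apply: eq_bigl => j; case: (leP (v j) t%:E) => [vjt|_]; last by case: (_ < _)%E.
  by rewrite (le_lt_trans vjt) // lte_fin.
by rewrite [X in _ <= X](bigID (fun j => (v j <= t%:E)%E)) /= lerDl sumr_ge0.
Qed.

Lemma inf_image_finType (R : realType) (T : finType) (f : T -> R) (P : set T) k0 :
  P k0 -> exists k, [/\ P k, inf (f @` P) = f k & forall k', P k' -> f k <= f k'].
Proof.
move=> Pk0.
have [k /asboolP Pk kmin] :=
  Order.TotalTheory.arg_minP (P := fun k => `[< P k >]) f (asboolT Pk0).
have fkmin k' : P k' -> f k <= f k' by move/asboolP/kmin.
have lb : lbound (f @` P) (f k) by move=> _ [k' /fkmin ? <-].
exists k; split => //; apply/le_anti/andP; split.
  by apply: ge_inf; [exists (f k)|exists k].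
by apply: lb_le_inf; first by exists (f k), k.
Qed.

Lemma with_y_test (R : realType) p n (s : (n.+1).-tuple (p.-tuple R * R)) :
  with_y s (tnth s ord_max).2 = s.
Proof.
apply: eq_from_tnth => i; rewrite tnth_mktuple.
by case: eqP => [->|//]; rewrite -surjective_pairing.
Qed.

Section Localizer.
Variables (R : realType) (p n : nat).
Notation Zt := (p.-tuple R * R)%type.
Variable V : Zt -> (n.+1).-tuple Zt -> R.
Variable H : p.-tuple R -> p.-tuple R -> (n.+1).-tuple (p.-tuple R) -> R.
Hypothesis H_ge0 : forall x x' s, 0 <= H x x' s.
Hypothesis H_diag : forall x s, H x x s = 1.
Implicit Types (s : (n.+1).-tuple Zt) (i j : 'I_n.+1).

Lemma Hm_ge0 s i j : 0 <= Hm H s i j. Proof. exact: H_ge0. Qed.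

Lemma sumHm_gt0 s i : 0 < \sum_(k < n.+1) Hm H s i k.
Proof.
by rewrite (bigD1 i) //= [Hm _ _ _ _]H_diag ltr_pwDl ?sumr_ge0 // => k _; apply: Hm_ge0.
Qed.

Lemma pH_ge0 s i j : 0 <= pH H s i j.
Proof. by rewrite divr_ge0 ?Hm_ge0 ?ltW ?sumHm_gt0. Qed.

Lemma pH_diag_gt0 s i : 0 < pH H s i i.
Proof. by rewrite /pH [Hm _ _ _ _]H_diag divr_gt0 ?sumHm_gt0. Qed.

Lemma sum_pH s i : \sum_(k < n.+1) pH H s i k = 1.
Proof. by rewrite -mulr_suml mulfV // gt_eqF ?sumHm_gt0. Qed.

Definition lower_mass s i : R := \sum_(j < n.+1 | Vs V s j < Vs V s i) pH H s i j.

Lemma lower_mass_lt1 s i : lower_mass s i < 1.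
Proof.
rewrite -(sum_pH s i) (bigID (fun j => Vs V s j < Vs V s i)) /= ltrDl.
rewrite (bigD1 i) ?ltxx //= ltr_pwDl ?pH_diag_gt0 ?sumr_ge0 // => j _.
exact: pH_ge0.
Qed.

Lemma quantile_Fi s i g :
  ((Vs V s i)%:E <= wquantile g (pH H s i) (Fi_vals V s))%E = (lower_mass s i < g).
Proof. by rewrite lee_wquantile; [congr (_ < _); apply: eq_bigl | exact: pH_ge0]. Qed.

Variable alpha : R.

Definition covered_at i : set ((n.+1).-tuple Zt) :=
  [set s | lower_mass s i < alpha_tilde V H alpha s].

Lemma coveredE s : covered V H alpha s <-> covered_at ord_max s.
Proof.
rewrite /covered lee_wquantile; last exact: pH_ge0.
suff -> : \sum_(j < n.+1 | (Fhat_vals V s j < (Vs V s ord_max)%:E)%E) pH H s ord_max j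
          = lower_mass s ord_max by [].
by apply: eq_bigl => j; rewrite /Fhat_vals; case: eqP => [->|_]; rewrite ?ltxx.
Qed.

Lemma conf_set_test s :
  conf_set V H alpha s (tnth s ord_max).2 <-> covered_at ord_max s.
Proof. by rewrite /conf_set /= with_y_test; exact: coveredE. Qed.

Definition count_lower s (g : R) : R := \sum_(i < n.+1) ((lower_mass s i < g)%R : nat)%:R.

Lemma alpha_condE s g :
  alpha_cond V H alpha s g = (alpha <= (n.+1)%:R^-1 * count_lower s g).
Proof. by congr (is_true (_ <= _ * _)); apply: eq_bigr => i _; rewrite quantile_Fi. Qed.

Definition Gamma_sum s (k : 'I_n.+1 * {set 'I_n.+1}) : R := \sum_(j in k.2) pH H s k.1 j.

Lemma alpha_tildeE s : alpha_tilde V H alpha s =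
  inf (Gamma_sum s @` [set k | alpha_cond V H alpha s (Gamma_sum s k)]).
Proof.
congr inf; apply/seteqP; split => [g [[i [I ->]] cond]|_ [[i I] cond <-]].
  by exists (i, I).
by split => //; exists i, I.
Qed.

Hypothesis alpha_le1 : alpha <= 1.

Lemma alpha_cond_full s :
  alpha_cond V H alpha s (Gamma_sum s (ord_max, [set: 'I_n.+1]%SET)).
Proof.
have -> : Gamma_sum s (ord_max, [set: 'I_n.+1]%SET) = 1.
  by rewrite -(sum_pH s ord_max); apply: eq_bigl => j; rewrite inE.
rewrite alpha_condE; have -> : count_lower s 1 = (n.+1)%:R.
  rewrite /count_lower (eq_bigr (fun=> 1)) ?sumr_const ?card_ord // => i _.
  by rewrite lower_mass_lt1.
by rewrite mulVf ?pnatr_eq0.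
Qed.

Lemma alpha_tilde_attained s : exists k,
  [/\ alpha_cond V H alpha s (Gamma_sum s k), alpha_tilde V H alpha s = Gamma_sum s k &
       forall k', alpha_cond V H alpha s (Gamma_sum s k') -> Gamma_sum s k <= Gamma_sum s k'].
Proof.
rewrite alpha_tildeE.
exact: (inf_image_finType _ (P := [set k | alpha_cond V H alpha s (Gamma_sum s k)])
  (alpha_cond_full s)).
Qed.

Lemma lt_alpha_tildeP s c : c < alpha_tilde V H alpha s <->
  forall k, alpha_cond V H alpha s (Gamma_sum s k) -> c < Gamma_sum s k.
Proof.
have [k [condk -> kmin]] := alpha_tilde_attained s.
by split => [ck k' /kmin|/(_ k condk)]; first exact: lt_le_trans.
Qed.

Lemma mean_covered_ge s :
  alpha <= (n.+1)%:R^-1 * \sum_(i < n.+1) \1_(covered_at i) s.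
Proof.
have [k [condk tildeE _]] := alpha_tilde_attained s.
suff -> : \sum_i \1_(covered_at i) s = count_lower s (alpha_tilde V H alpha s).
  by rewrite -alpha_condE tildeE.
by apply: eq_bigr => i _; rewrite indicE mem_setE.
Qed.

Lemma covered_atE i : covered_at i = \bigcap_(k in [set: 'I_n.+1 * {set 'I_n.+1}])
  (~` [set s | alpha <= (n.+1)%:R^-1 * count_lower s (Gamma_sum s k)] `|`
   [set s | lower_mass s i < Gamma_sum s k]).
Proof.
apply/seteqP; split => s /=; [move=> covered k _|move=> covered].
  have [cond|] := pselect (alpha <= (n.+1)%:R^-1 * count_lower s (Gamma_sum s k)).
    by right; apply: ((lt_alpha_tildeP s _).1 covered k); rewrite alpha_condE.
  by left.
by apply/lt_alpha_tildeP => k; rewrite alpha_condE => cond; case: (covered k I).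
Qed.

End Localizer.

Definition perm_tuple T m (s : m.-tuple T) (σ : {perm 'I_m}) : m.-tuple T :=
  [tuple tnth s (σ i) | i < m].

Lemma perm_tuple_perm_eq (T : eqType) m (s : m.-tuple T) σ : perm_eq (perm_tuple s σ) s.
Proof. by apply/tuple_permP; exists σ. Qed.

Lemma perm_tupleK T m (s : m.-tuple T) σ : perm_tuple (perm_tuple s σ) σ^-1 = s.
Proof. by apply: eq_from_tnth => i; rewrite !tnth_mktuple permKV. Qed.

Section PermutationInvariance.
Variables (R : realType) (p n : nat).
Notation Zt := (p.-tuple R * R)%type.
Variable V : Zt -> (n.+1).-tuple Zt -> R.
Variable H : p.-tuple R -> p.-tuple R -> (n.+1).-tuple (p.-tuple R) -> R.
Variable alpha : R.
Hypothesis V_perm : forall z (s s' : (n.+1).-tuple Zt), perm_eq s s' -> V z s = V z s'.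
Hypothesis H_perm : forall x x' (s s' : (n.+1).-tuple (p.-tuple R)),
  perm_eq s s' -> H x x' s = H x x' s'.
Hypothesis H_ge0 : forall x x' s, 0 <= H x x' s.
Hypothesis H_diag : forall x s, H x x s = 1.
Implicit Types (s : (n.+1).-tuple Zt) (σ : {perm 'I_n.+1}).

Lemma Vs_perm s σ i : Vs V (perm_tuple s σ) i = Vs V s (σ i).
Proof. by rewrite /Vs tnth_mktuple; apply/V_perm/perm_tuple_perm_eq. Qed.

Lemma covs_perm s σ : covs (perm_tuple s σ) = perm_tuple (covs s) σ.
Proof. by apply: eq_from_tnth => i; rewrite !tnth_mktuple. Qed.

Lemma Hm_perm s σ i j : Hm H (perm_tuple s σ) i j = Hm H s (σ i) (σ j).
Proof. by rewrite /Hm covs_perm !tnth_mktuple; apply/H_perm/perm_tuple_perm_eq. Qed.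

Lemma pH_perm s σ i j : pH H (perm_tuple s σ) i j = pH H s (σ i) (σ j).
Proof.
rewrite /pH Hm_perm; congr (_ / _); under eq_bigr do rewrite Hm_perm.
by rewrite [RHS](reindex_inj (@perm_inj _ σ)).
Qed.

Lemma lower_mass_perm s σ i :
  lower_mass V H (perm_tuple s σ) i = lower_mass V H s (σ i).
Proof.
rewrite /lower_mass; under eq_bigr do rewrite pH_perm.
under eq_bigl do rewrite !Vs_perm.
by rewrite [RHS](reindex_inj (@perm_inj _ σ)).
Qed.

Lemma count_lower_perm s σ g : count_lower V H (perm_tuple s σ) g = count_lower V H s g.
Proof.
rewrite /count_lower; under eq_bigr do rewrite lower_mass_perm.
by rewrite [RHS](reindex_inj (@perm_inj _ σ)).
Qed.

Lemma alpha_cond_perm s σ g :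
  alpha_cond V H alpha (perm_tuple s σ) g = alpha_cond V H alpha s g.
Proof. by rewrite !alpha_condE // count_lower_perm. Qed.

Lemma Gamma_perm_sub s σ : Gamma H (perm_tuple s σ) `<=` Gamma H s.
Proof.
move=> _ [i [I ->]]; exists (σ i), (σ @: I)%SET.
by under eq_bigr do rewrite pH_perm; rewrite big_imset //= => x y _ _ /perm_inj.
Qed.

Lemma alpha_tilde_perm s σ :
  alpha_tilde V H alpha (perm_tuple s σ) = alpha_tilde V H alpha s.
Proof.
have Gamma_permE : Gamma H (perm_tuple s σ) = Gamma H s.
  apply/seteqP; split; first exact: Gamma_perm_sub.
  by rewrite -{1}(perm_tupleK s σ); apply: Gamma_perm_sub.
rewrite /alpha_tilde Gamma_permE; congr inf; apply/seteqP.
by split => g /=; rewrite alpha_cond_perm.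
Qed.

Lemma covered_at_perm s σ i :
  covered_at V H alpha i (perm_tuple s σ) = covered_at V H alpha (σ i) s.
Proof. by rewrite /covered_at /= lower_mass_perm alpha_tilde_perm. Qed.

End PermutationInvariance.

Lemma measurable_inv_pos (R : realType) :
  measurable_fun (`]0, +oo[%classic : set R) (@GRing.inv R).
Proof.
apply: open_continuous_measurable_fun; first exact: interval_open.
by move=> x; rewrite inE /= in_itv /= andbT => x0; apply: inv_continuous; rewrite gt_eqF.
Qed.

Lemma measurable_bool_set d (T : measurableType d) (b : T -> bool) :
  measurable_fun setT b -> measurable [set x | b x].
Proof.
move=> mb; have := mb measurableT [set true] I.
by rewrite setTI; congr measurable; apply/seteqP; split => x /=.
Qed.

Section Measurability.
Variables (R : realType) (p n : nat).
Notation Zt := (p.-tuple R * R)%type.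
Notation data := ((n.+1).-tuple Zt).
Variable V : Zt -> data -> R.
Variable H : p.-tuple R -> p.-tuple R -> (n.+1).-tuple (p.-tuple R) -> R.
Variable alpha : R.
Hypothesis H_ge0 : forall x x' s, 0 <= H x x' s.
Hypothesis H_diag : forall x s, H x x s = 1.
Hypothesis alpha_le1 : alpha <= 1.
Hypothesis mV : measurable_fun [set: Zt * data] (fun q => V q.1 q.2).
Hypothesis mH : measurable_fun [set: (p.-tuple R * p.-tuple R) * (n.+1).-tuple (p.-tuple R)]
  (fun q => H q.1.1 q.1.2 q.2).

Lemma measurable_Vs j : measurable_fun setT (fun s : data => Vs V s j).
Proof.
change (measurable_fun setT ((fun q => V q.1 q.2) \o fun s : data => (tnth s j, s))).
apply: (measurableT_comp mV); exact: measurable_fun_pair (measurable_tnth j) _.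
Qed.

Lemma measurable_covs : measurable_fun setT (@covs R p n).
Proof.
apply/measurable_fun_tnthP => i.
rewrite (_ : _ \o _ = fst \o fun s : data => tnth s i).
  exact: measurableT_comp (measurable_tnth i).
by apply: funext => s /=; rewrite tnth_mktuple.
Qed.

Lemma measurable_Hm i j : measurable_fun setT (fun s : data => Hm H s i j).
Proof.
change (measurable_fun setT ((fun q => H q.1.1 q.1.2 q.2) \o
  fun s : data => ((tnth (covs s) i, tnth (covs s) j), covs s))).
apply: (measurableT_comp mH); apply: measurable_fun_pair; last exact: measurable_covs.
by apply: measurable_fun_pair; exact: measurableT_comp (measurable_tnth _) measurable_covs.
Qed.

Lemma measurable_pH i j : measurable_fun setT (fun s : data => pH H s i j).
Proof.
apply: measurable_funM; first exact: measurable_Hm.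
apply: (measurable_comp _ _ (@measurable_inv_pos R)).
- exact: measurable_itv.
- by move=> _ [s _ <-] /=; rewrite in_itv /= andbT sumHm_gt0.
- by apply: measurable_sum => k; exact: measurable_Hm.
Qed.

Lemma measurable_lower_mass i : measurable_fun setT (fun s : data => lower_mass V H s i).
Proof.
rewrite /lower_mass; under eq_fun do rewrite big_mkcond /=.
apply: measurable_sum => j; apply: measurable_fun_ifT => //; last exact: measurable_pH.
by apply: measurable_fun_ltr; exact: measurable_Vs.
Qed.

Lemma measurable_Gamma_sum k : measurable_fun setT (fun s : data => Gamma_sum H s k).
Proof.
rewrite /Gamma_sum; under eq_fun do rewrite big_mkcond /=.
by apply: measurable_sum => j; case: (j \in k.2) => //; exact: measurable_pH.
Qed.

Lemma measurable_count_lower k :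
  measurable_fun setT (fun s : data => count_lower V H s (Gamma_sum H s k)).
Proof.
apply: measurable_sum => i; rewrite (_ : (fun _ => _) =
  fun s => if lower_mass V H s i < Gamma_sum H s k then 1 else 0); last first.
  by apply: funext => s; case: ifP.
apply: measurable_fun_ifT => //.
exact: measurable_fun_ltr (measurable_lower_mass i) (measurable_Gamma_sum k).
Qed.

Lemma measurable_covered_at i : measurable (covered_at V H alpha i).
Proof.
rewrite covered_atE //; apply: fin_bigcap_measurable => [|k _]; first exact: finite_finset.
apply: measurableU; last first.
  apply: measurable_bool_set.
  exact: measurable_fun_ltr (measurable_lower_mass i) (measurable_Gamma_sum k).
apply/measurableC/measurable_bool_set/measurable_fun_ler => //.
exact: measurable_funM (measurable_count_lower k).
Qed.

End Measurability.

Section Boxes.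
Context d (T : measurableType d) (m : nat).

Definition box (A : 'I_m -> set T) : set (m.-tuple T) := [set t | forall i, A i (tnth t i)].

Definition boxes : set (set (m.-tuple T)) :=
  [set box A | A in [set A | forall i, measurable (A i)]].

Lemma boxE A :
  box A = \bigcap_(i in [set: 'I_m]) ((fun t : m.-tuple T => tnth t i) @^-1` A i).
Proof. by apply/seteqP; split => t /= tA i; [move=> _|]; apply: tA. Qed.

Lemma measurable_box A : (forall i, measurable (A i)) -> measurable (box A).
Proof.
move=> mA; rewrite boxE; apply: fin_bigcap_measurable => [|i _]; first exact: finite_finset.
by rewrite -[X in measurable X]setTI; apply: measurable_tnth.
Qed.

Lemma measurable_tupleE : measurable = <<s boxes >>.
Proof.
rewrite eqEsubset; split; last first.
  apply: smallest_sub; first exact: sigma_algebra_measurable.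
  by move=> _ [A mA <-]; exact: measurable_box.
apply: smallest_sub; first exact: smallest_sigma_algebra.
elim/big_ind: _ => // [X Y mX mY B [/mX|/mY] //|i _ _ [A mA <-]].
apply: sub_sigma_algebra; exists (fun j => if j == i then A else setT).
  by move=> j; case: eqP.
apply/seteqP; split => t /=; first by move/(_ i); rewrite eqxx.
by move=> [_ ti] j; case: eqP => // ->.
Qed.

Lemma setI_closed_boxes : setI_closed boxes.
Proof.
move=> _ _ [A mA <-] [B mB <-]; exists (fun i => A i `&` B i).
  by move=> i; apply: measurableI.
by apply/seteqP; split => t /= tAB; [split => i; case: (tAB i)|case: tAB => tA tB i].
Qed.

Lemma boxes_setT : boxes setT.
Proof. by exists (fun=> setT) => //; apply/seteqP; split. Qed.

End Boxes.

Section Exchangeability.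
Context d d' (Omega : measurableType d) (T : measurableType d') (R : realType).
Variables (P : probability Omega R) (m : nat) (Zs : 'I_m.+1 -> Omega -> T).
Hypothesis mZ : forall i, measurable_fun [set: Omega] (Zs i).
Hypothesis indep : mutually_independent P Zs.
Hypothesis ident : identically_distributed P Zs.

Definition sample (σ : {perm 'I_m.+1}) (w : Omega) : m.+1.-tuple T :=
  [tuple Zs (σ i) w | i < m.+1].

Lemma measurable_sample σ : measurable_fun setT (sample σ).
Proof.
apply/measurable_fun_tnthP => i.
by rewrite (_ : _ \o _ = Zs (σ i)) //; apply: funext => w /=; rewrite tnth_mktuple.
Qed.

HB.instance Definition _ σ :=
  isMeasurableFun.Build _ _ _ _ (sample σ) (measurable_sample σ).

Lemma sample1 w : sample 1 w = [tuple Zs i w | i < m.+1].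
Proof. by apply: eq_from_tnth => i; rewrite !tnth_mktuple perm1. Qed.

Lemma sample_perm σ w : perm_tuple (sample 1 w) σ = sample σ w.
Proof. by apply: eq_from_tnth => i; rewrite !tnth_mktuple perm1. Qed.

Lemma prob_sample_box σ A : (forall i, measurable (A i)) ->
  P (sample σ @^-1` box A) = (\prod_(i < m.+1) P (Zs ord0 @^-1` A i))%E.
Proof.
move=> mA; have -> : sample σ @^-1` box A =
    \bigcap_(j in [set: 'I_m.+1]) (Zs j @^-1` A (σ^-1 j)%g).
  apply/seteqP; split => w /= wA j.
    by move=> _; have := wA (σ^-1 j)%g; rewrite tnth_mktuple permKV.
  by rewrite tnth_mktuple; have /= := wA (σ j) I; rewrite permK.
rewrite indep; last by move=> j; exact: mA.
under eq_bigr do rewrite ident //.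
by rewrite [RHS](reindex_inj (@perm_inj _ σ^-1%g)).
Qed.

Lemma exchangeable σ B :
  measurable B -> P (sample σ @^-1` B) = P (sample 1 @^-1` B).
Proof.
move=> mB; change (distribution P (sample σ) B = distribution P (sample 1) B).
apply: (measure_unique _ (fun=> setT) (@measurable_tupleE _ T m.+1)
  (@setI_closed_boxes _ T m.+1)) => //.
- by move=> _; exact: boxes_setT.
- by rewrite bigcup_const.
- move=> _ [A mA <-].
  by change (P (sample σ @^-1` box A) = P (sample 1 @^-1` box A)); rewrite !prob_sample_box.
- by move=> _; change (P (sample σ @^-1` setT) < +oo)%E; rewrite probability_setT ltry.
Qed.

End Exchangeability.

Lemma le_prob_equiprobable d (Omega : measurableType d) (R : realType)
    (P : probability Omega R) m (X : 'I_m.+1 -> set Omega) (a : R) j0 :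
  (forall i, measurable (X i)) -> (forall i, P (X i) = P (X j0)) ->
  (forall w, a <= m.+1%:R^-1 * \sum_(i < m.+1) \1_(X i) w) ->
  (a%:E <= P (X j0))%E.
Proof.
move=> mX PX mean_ge.
have [a_le0|a_gt0] := leP a 0.
  by apply: le_trans (measure_ge0 P (X j0)); rewrite lee_fin.
have sumPX : (\sum_(i < m.+1) P (X i) = \int[P]_w (\sum_(i < m.+1) \1_(X i) w)%:E)%E.
  under eq_integral do rewrite -sumEFin.
  rewrite ge0_integral_sum // => [|i]; last first.
    by apply/measurable_EFinP; exact: measurable_indic.
  by apply: eq_bigr => i _; rewrite integral_indic // setIT.
have : ((m.+1%:R * a)%:E <= \sum_(i < m.+1) P (X i))%E.
  rewrite sumPX -[X in (X <= _)%E]mule1 -(probability_setT P) -integral_cst //.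
  apply: ge0_le_integral => //.
  - by move=> w _; rewrite lee_fin mulr_ge0 // ltW.
  - by apply/measurable_EFinP; apply: measurable_sum => i; exact: measurable_indic.
  - by move=> w _; rewrite lee_fin -ler_pdivlMl ?ltr0Sn.
under eq_bigr do rewrite PX.
have : P (X j0) \is a fin_num by apply: fin_num_measure.
case: (P (X j0)) => // r _.
by rewrite sumEFin sumr_const card_ord !lee_fin -[r *+ _]mulr_natl ler_pM2l ?ltr0Sn.
Qed.

Unset Implicit Arguments. Set Strict Implicit.

Theorem corollary1 (R : realType) (p n : nat)
  (d : measure_display) (Omega : measurableType d) (P : probability Omega R)
  (Zs : 'I_n.+1 -> Omega -> (p.-tuple R * R)%type)
  (V : (p.-tuple R * R)%type -> (n.+1).-tuple (p.-tuple R * R)%type -> R)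
  (H : p.-tuple R -> p.-tuple R -> (n.+1).-tuple (p.-tuple R) -> R)
  (alpha : R) :
  (forall i, measurable_fun [set: Omega] (Zs i)) ->
  mutually_independent P Zs ->
  identically_distributed P Zs ->
  (* V depends on the data only through the unordered set {Z_1..Z_{n+1}} *)
  (forall z (s s' : (n.+1).-tuple (p.-tuple R * R)%type),
      perm_eq s s' -> V z s = V z s') ->
  (* H : R^p x R^p -> [0,1], depends on data only through {X_1..X_{n+1}} *)
  (forall x x' (s s' : (n.+1).-tuple (p.-tuple R)),
      perm_eq s s' -> H x x' s = H x x' s') ->
  (forall x x' s, 0 <= H x x' s <= 1) ->
  (forall x s, H x x s = 1) ->
  (* measurability of the score and localizer *)
  measurable_fun [set: (p.-tuple R * R) * (n.+1).-tuple (p.-tuple R * R)]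
    (fun q => V q.1 q.2) ->
  measurable_fun [set: (p.-tuple R * p.-tuple R) * (n.+1).-tuple (p.-tuple R)]
    (fun q => H q.1.1 q.1.2 q.2) ->
  0 < alpha < 1 ->
  (alpha%:E <=
     P [set w | conf_set V H alpha [tuple Zs i w | i < n.+1] (Zs ord_max w).2])%E.
Proof.
move=> mZ indep ident V_perm H_perm H01 H_diag mV mH /andP[_ /ltW alpha_le1].
have H_ge0 x x' s : 0 <= H x x' s by case/andP: (H01 x x' s).
pose E i := sample Zs 1 @^-1` covered_at V H alpha i.
have -> : [set w | conf_set V H alpha [tuple Zs i w | i < n.+1] (Zs ord_max w).2] = E ord_max.
  apply/seteqP; split => w;
    by rewrite /E /= sample1 -(conf_set_test V H_ge0 H_diag) tnth_mktuple.
have mE i : measurable (E i).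
  by rewrite -[E i]setTI; apply: measurable_sample => //; exact: measurable_covered_at.
apply: (le_prob_equiprobable (X := E)) => // [i|w].
- rewrite /E -(exchangeable mZ indep ident (tperm i ord_max)).
    by congr (P _); apply: funext => w; rewrite /= -sample_perm covered_at_perm // tpermL.
  exact: measurable_covered_at.
- have := mean_covered_ge V H_ge0 H_diag alpha_le1 (sample Zs 1 w).
  by congr (_ <= _ * _); apply: eq_bigr => i _; rewrite /E !indicE.
Qed.
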